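(* Let $\mathcal A$ be a finite non-associative algebra. Then $\mathcal A$ has a feeble representation if and only if there is a consistent atomic network $(N,\lambda)$ over $\mathcal A$ such that for every atom $a$ of $\mathcal A$ there are $x,y\in N$ with $\lambda(x,y)=a$.
   Context: A non-associative algebra is an algebra $(A,0,1,+,-,1',\breve{\ },;)$ such that $(A,0,1,+,-)$ is a boolean algebra (with $x\cdot y=-(-x+-y)$, $x\le y\iff x+y=y$); $1';x=x=x;1'$, $\breve{\breve x}=x$, $(x;y)\breve{}=\breve y;\breve x$; $\breve 0=x;0=0$, $(x+y)\breve{}=\breve x+\breve y$, $x;(y+z)=x;y+x;z$; and the Peircean law: $x;y\cdot\breve z=0$ iff $y;z\cdot\breve x=0$. An atom is a minimal nonzero element. A feeble representation of $\mathcal A$ over base $D$ is an injective map $\phi:A\to\wp(D\times D)$ such that $0^\phi=\varnothing$, $1^\phi=D\times D$, $(1')^\phi=\{(x,x):x\in D\}$, $(a+b)^\phi=a^\phi\cup b^\phi$, $(-a)^\phi=(D\times D)\setminus a^\phi$, $(\breve a)^\phi=\{(y,x):(x,y)\in a^\phi\}$, and $(a;b)^\phi\supseteq a^\phi\circ b^\phi$ for all $a,b\in A$ (where $\circ$ is relational composition). A network over $\mathcal A$ is a pair $(N,\lambda)$ with $N$ a finite set and $\lambda:N\times N\to A$; it is consistent if for all $x,y,z\in N$: $\lambda(x,x)\le 1'$; $\lambda(x,y);\lambda(y,z)\cdot\lambda(x,z)\ne 0$; $\lambda(x,y)\cdot\lambda(y,x)\breve{}\ne0$; $\lambda(x,y)\ne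 0$. It is atomic if every $\lambda(x,y)$ is an atom. *)

From mathcomp Require Import all_boot.
Set Implicit Arguments. Unset Strict Implicit. Unset Printing Implicit Defensive.

Record naa (T : Type) : Type := NAA {
  zero : T; one : T; plus : T -> T -> T; neg : T -> T;
  ident : T; conv : T -> T; comp : T -> T -> T;
  (* (A,0,1,+,-) is a boolean algebra, with x.y := -(-x + -y) *)
  plusA : forall x y z, plus x (plus y z) = plus (plus x y) z;
  plusC : forall x y, plus x y = plus y x;
  multA : forall x y z,
    neg (plus (neg x) (neg (neg (plus (neg y) (neg z)))))
    = neg (plus (neg (neg (plus (neg x) (neg y)))) (neg z));
  multC : forall x y, neg (plus (neg x) (neg y)) = neg (plus (neg y) (neg x));
  absorb1 : forall x y, plus x (neg (plus (neg x) (neg y))) = x;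
  absorb2 : forall x y, neg (plus (neg x) (neg (plus x y))) = x;
  distr : forall x y z,
    neg (plus (neg x) (neg (plus y z)))
    = plus (neg (plus (neg x) (neg y))) (neg (plus (neg x) (neg z)));
  plus0 : forall x, plus x zero = x;
  mult1 : forall x, neg (plus (neg x) (neg one)) = x;
  complP : forall x, plus x (neg x) = one;
  complM : forall x, neg (plus (neg x) (neg (neg x))) = zero;
  ident_l : forall x, comp ident x = x;
  ident_r : forall x, comp x ident = x;
  conv_inv : forall x, conv (conv x) = x;
  conv_comp : forall x y, conv (comp x y) = comp (conv y) (conv x);
  conv0 : conv zero = zero;
  comp0 : forall x, comp x zero = zero;
  conv_plus : forall x y, conv (plus x y) = plus (conv x) (conv y);
  comp_plus : forall x y z, comp x (plus y z) = plus (comp x y) (comp x z);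
  peirce : forall x y z,
    neg (plus (neg (comp x y)) (neg (conv z))) = zero <->
    neg (plus (neg (comp y z)) (neg (conv x))) = zero
}.

Section Defs.
Variables (T : Type) (A : naa T).

Definition meet (x y : T) : T := neg A (plus A (neg A x) (neg A y)).
Definition leA (x y : T) : Prop := plus A x y = y.

Definition is_atom (a : T) : Prop :=
  a <> zero A /\ forall b, leA b a -> b <> zero A -> b = a.

Definition rel_eq {D : Type} (r s : D -> D -> Prop) : Prop :=
  forall u v, r u v <-> s u v.

Definition feeble_rep (D : Type) (phi : T -> D -> D -> Prop) : Prop :=
  (forall a b, rel_eq (phi a) (phi b) -> a = b) /\
  rel_eq (phi (zero A)) (fun _ _ => False) /\
  rel_eq (phi (one A)) (fun _ _ => True) /\
  rel_eq (phi (ident A)) (fun u v => u = v) /\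
  (forall a b, rel_eq (phi (plus A a b)) (fun u v => phi a u v \/ phi b u v)) /\
  (forall a, rel_eq (phi (neg A a)) (fun u v => ~ phi a u v)) /\
  (forall a, rel_eq (phi (conv A a)) (fun u v => phi a v u)) /\
  (forall a b u v, (exists w, phi a u w /\ phi b w v) -> phi (comp A a b) u v).

Definition has_feeble_rep : Prop :=
  exists (D : Type) (phi : T -> D -> D -> Prop), feeble_rep phi.

Definition consistent_network (N : finType) (lam : N -> N -> T) : Prop :=
  forall x y z : N,
    leA (lam x x) (ident A) /\
    meet (comp A (lam x y) (lam y z)) (lam x z) <> zero A /\
    meet (lam x y) (conv A (lam y x)) <> zero A /\
    lam x y <> zero A.

Definition atomic_network (N : finType) (lam : N -> N -> T) : Prop :=
  forall x y : N, is_atom (lam x y).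

End Defs.

(* From a feeble representation: the elements holding at a pair of base points form
   an ultrafilter, so each pair lies in exactly one atom.  Choosing a witness pair for
   every atom and labelling each pair of chosen points by its atom gives a finite atomic
   network, consistent because the representation respects 1', converse, and composition
   up to inclusion.

   From a network: nodes x, y with lam(x,y) <= 1' are identified (consistency makes this
   an equivalence compatible with the labels), and a holds at (x,y) iff lam(x,y) <= a.
   Since labels are atoms this respects the boolean operations and converse, consistency
   gives the composition inclusion, and injectivity follows because every atom occurs as
   a label and a finite boolean algebra is atomic. *)

From Pilot Require Import Defs.
From mathcomp Require Import all_boot.
From Stdlib Require Import Classical ClassicalEpsilon.

Set Implicit Arguments. Unset Strict Implicit.
Local Open Scope quotient_scope.

Section BooleanAlgebra.
Context {T : Type} {A : naa T}.
Local Notation join := (Defs.plus A).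
Local Notation compl := (Defs.neg A).
Local Notation meet := (Defs.meet A).
Local Notation le := (leA A).
Local Notation bot := (Defs.zero A).
Local Notation top := (Defs.one A).
Local Notation cmp := (Defs.comp A).

Lemma meetA x y z : meet x (meet y z) = meet (meet x y) z. Proof. exact: multA. Qed.
Lemma meetC x y : meet x y = meet y x. Proof. exact: multC. Qed.
Lemma joinKI x y : join x (meet x y) = x. Proof. exact: absorb1. Qed.
Lemma meetKU x y : meet x (join x y) = x. Proof. exact: absorb2. Qed.
Lemma meetUr x y z : meet x (join y z) = join (meet x y) (meet x z).
Proof. exact: distr. Qed.
Lemma meetx1 x : meet x top = x. Proof. exact: mult1. Qed.
Lemma meetxC x : meet x (compl x) = bot. Proof. exact: complM. Qed.

Lemma join0x x : join bot x = x. Proof. by rewrite plusC plus0. Qed.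
Lemma joinxx x : join x x = x. Proof. by rewrite -{2}(meetKU x bot) joinKI. Qed.

Lemma leA_meetE x y : le x y <-> meet x y = x.
Proof.
split=> h; first by rewrite -h meetKU.
by rewrite /leA -h plusC meetC joinKI.
Qed.

Lemma meet_compl0_le x y : meet x (compl y) = bot -> le x y.
Proof.
by move=> h; apply/leA_meetE; rewrite -{2}(meetx1 x) -(complP A y) meetUr h plus0.
Qed.

Lemma leA_refl x : le x x. Proof. exact: joinxx. Qed.
Lemma leA_trans x y z : le x y -> le y z -> le x z.
Proof. by move=> h1 h2; rewrite /leA -h2 plusA h1. Qed.
Lemma leA_anti x y : le x y -> le y x -> x = y.
Proof. by move=> h1 h2; rewrite -h2 plusC h1. Qed.
Lemma leA_meetl x y : le (meet x y) x. Proof. by rewrite /leA plusC joinKI. Qed.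
Lemma leA_meetr x y : le (meet x y) y. Proof. by rewrite meetC; apply: leA_meetl. Qed.
Lemma leA_meet x y z : le z x -> le z y -> le z (meet x y).
Proof. by move=> /leA_meetE h1 /leA_meetE h2; apply/leA_meetE; rewrite meetA h1 h2. Qed.
Lemma leA_joinl x y : le x (join x y). Proof. by rewrite /leA plusA joinxx. Qed.
Lemma leA_joinr x y : le y (join x y). Proof. by rewrite plusC; apply: leA_joinl. Qed.
Lemma leA_top x : le x top. Proof. by rewrite /leA -(complP A x) plusA joinxx. Qed.
Lemma leA_bot x : le x bot -> x = bot. Proof. by rewrite /leA plus0. Qed.
Lemma leA_meet2r x x' y : le x x' -> le (meet x y) (meet x' y).
Proof.
by move=> h; apply: leA_meet; [apply: leA_trans h; apply: leA_meetl | apply: leA_meetr].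
Qed.

Lemma leA_conv x y : le x y -> le (conv A x) (conv A y).
Proof. by move=> h; rewrite /leA -conv_plus h. Qed.
Lemma leA_conv2 x y : le (conv A x) (conv A y) <-> le x y.
Proof. by split=> [/leA_conv|]; [rewrite !conv_inv | apply: leA_conv]. Qed.
Lemma leA_comp2l x y z : le y z -> le (cmp x y) (cmp x z).
Proof. by move=> h; rewrite /leA -comp_plus h. Qed.
Lemma leA_comp2r x y z : le y z -> le (cmp y x) (cmp z x).
Proof.
move=> h; apply/leA_conv2; rewrite !conv_comp; apply: leA_comp2l; exact: leA_conv.
Qed.

Lemma atom_leVmeet0 c x : is_atom A c -> le c x \/ meet c x = bot.
Proof.
move=> [_ min_c]; case: (classic (meet c x = bot)) => h; first by right.
by left; apply/leA_meetE; apply: min_c => //; apply: leA_meetl.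
Qed.

Lemma atom_le_compl c x : is_atom A c -> (le c (compl x) <-> ~ le c x).
Proof.
move=> hc; split=> [h1 h2|h].
  by case: hc => + _; apply; apply: leA_bot; rewrite -(meetxC x); apply: leA_meet.
case: (atom_leVmeet0 x hc) => // h'; apply/leA_meetE.
by rewrite -{2}(meetx1 c) -(complP A x) meetUr h' join0x.
Qed.

Lemma atom_le_join c x y : is_atom A c -> (le c (join x y) <-> le c x \/ le c y).
Proof.
move=> hc; split=> [/leA_meetE h|]; last first.
  by case=> h; [apply: leA_trans h (leA_joinl _ _) | apply: leA_trans h (leA_joinr _ _)].
case: (atom_leVmeet0 x hc) => [|hx]; first by left.
case: (atom_leVmeet0 y hc) => [|hy]; first by right.
by case: hc => nz _; exfalso; apply: nz; rewrite -h meetUr hx hy plus0.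
Qed.

Lemma atom_meet_neq0 c d : is_atom A c -> is_atom A d -> meet c d <> bot -> c = d.
Proof.
move=> hc hd h; apply: leA_anti; first by case: (atom_leVmeet0 d hc).
by case: (atom_leVmeet0 c hd) => // e; rewrite meetC in e.
Qed.

Lemma atom_conv c : is_atom A c -> is_atom A (conv A c).
Proof.
have conv_eq0 x : conv A x = bot -> x = bot.
  by move=> e; rewrite -(conv_inv A x) e conv0.
move=> [nz min_c]; split=> [/conv_eq0 //|b hb nb].
rewrite -(conv_inv A b); congr (conv A _); apply: min_c.
  by apply/leA_conv2; rewrite conv_inv.
by move=> /(f_equal (conv A)); rewrite conv_inv conv0.
Qed.

End BooleanAlgebra.

Section FiniteBooleanAlgebra.
Context {T : finType} {A : naa T}.
Local Notation compl := (Defs.neg A).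
Local Notation meet := (Defs.meet A).
Local Notation le := (leA A).
Local Notation bot := (Defs.zero A).

Definition downset x := [set z | Defs.plus A z x == x].

Lemma downsetP z x : reflect (le z x) (z \in downset x).
Proof. by rewrite inE; apply: eqP. Qed.

Lemma downset_proper b c : le b c -> b <> c -> downset b \proper downset c.
Proof.
move=> bc neq; apply/properP; split.
  by apply/subsetP=> z /downsetP zb; apply/downsetP; apply: leA_trans zb bc.
exists c; first exact/downsetP/leA_refl.
by apply/negP=> /downsetP cb; apply: neq; exact: leA_anti bc cb.
Qed.

Lemma atom_below x : x <> bot -> exists2 c, is_atom A c & le c x.
Proof.
move=> x_neq0; pose P b := (b != bot) && (b \in downset x).
have Px : P x by apply/andP; split; [exact/eqP | exact/downsetP/leA_refl].
case: (arg_minnP (fun b => #|downset b|) Px) => c /andP[/eqP c_neq0 /downsetP cx] c_min.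
exists c => //; split=> // b bc b_neq0; apply: NNPP => b_neq_c.
have := proper_card (downset_proper bc b_neq_c); rewrite ltnNge c_min //.
by apply/andP; split; [exact/eqP | exact/downsetP/(leA_trans bc)].
Qed.

Lemma leA_of_atoms x y : (forall c, is_atom A c -> le c x -> le c y) -> le x y.
Proof.
move=> atoms_xy; case: (classic (meet x (compl y) = bot)) => [|/atom_below [c hc cxy]].
  exact: meet_compl0_le.
have /(atom_le_compl y hc) := leA_trans cxy (leA_meetr _ _); case.
by apply: atoms_xy => //; apply: leA_trans cxy (leA_meetl _ _).
Qed.

End FiniteBooleanAlgebra.

Section NetworkRepresentation.
Context {T : finType} {A : naa T} {N : finType} (lam : N -> N -> T).
Hypotheses (lam_consistent : consistent_network A lam)
  (lam_atomic : atomic_network A lam).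
Local Notation le := (leA A).
Local Notation cmp := (Defs.comp A).
Local Notation id1 := (ident A).

Lemma label_identl x y z : le (lam x y) id1 -> lam x z = lam y z.
Proof.
move=> xy; have [_ [nz _]] := lam_consistent x y z.
apply/esym/(atom_meet_neq0 (lam_atomic _ _) (lam_atomic _ _)) => e; apply: nz.
apply: leA_bot; rewrite -e; apply: leA_meet2r.
by rewrite -{2}(ident_l A (lam y z)); apply: leA_comp2r.
Qed.

Lemma label_identr x y z : le (lam x y) id1 -> lam z x = lam z y.
Proof.
move=> xy; have [_ [nz _]] := lam_consistent z x y.
apply: (atom_meet_neq0 (lam_atomic _ _) (lam_atomic _ _)) => e; apply: nz.
apply: leA_bot; rewrite -e; apply: leA_meet2r.
by rewrite -{2}(ident_r A (lam z x)); apply: leA_comp2l.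
Qed.

Lemma label_conv x y : lam x y = conv A (lam y x).
Proof.
have [_ [_ [nz _]]] := lam_consistent x y x.
exact: atom_meet_neq0 (lam_atomic _ _) (atom_conv (lam_atomic _ _)) nz.
Qed.

Definition same_point x y := Defs.plus A (lam x y) id1 == id1.

Lemma same_pointP x y : reflect (le (lam x y) id1) (same_point x y).
Proof. exact: eqP. Qed.

Lemma same_point_refl : reflexive same_point.
Proof. by move=> x; apply/same_pointP; case: (lam_consistent x x x). Qed.

Lemma same_point_sym : symmetric same_point.
Proof.
suff imp x y : same_point x y -> same_point y x.
  by move=> x y; apply/idP/idP; apply: imp.
move=> /same_pointP xy; apply/same_pointP; rewrite (label_identr y xy).
exact/same_pointP/same_point_refl.
Qed.

Lemma same_point_trans : transitive same_point.
Proof.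
move=> y x z /same_pointP xy /same_pointP yz.
by apply/same_pointP; rewrite (label_identl z xy).
Qed.

Definition point_equiv :=
  EquivRel same_point same_point_refl same_point_sym same_point_trans.

Definition point := {eq_quot point_equiv}.

Definition network_rep (a : T) (u v : point) : Prop := le (lam (repr u) (repr v)) a.

Lemma label_repr_pi x y : lam (repr (\pi_point x)) (repr (\pi_point y)) = lam x y.
Proof.
have same_repr z : le (lam (repr (\pi_point z)) z) id1.
  by apply/same_pointP/(@eqquotP _ _ point); rewrite reprK.
by rewrite (label_identl _ (same_repr x)) (label_identr _ (same_repr y)).
Qed.

Lemma network_rep_ident u v : network_rep id1 u v <-> u = v.
Proof.
split=> [/same_pointP uv | <-]; last exact/same_pointP/same_point_refl.
by rewrite -[u]reprK -[v]reprK; apply/(@eqquotP _ _ point).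
Qed.

Lemma network_rep_comp a b u v w :
  network_rep a u w -> network_rep b w v -> network_rep (cmp a b) u v.
Proof.
rewrite /network_rep; move: (repr u) (repr w) (repr v) => x y z xy yz.
have [_ [nz _]] := lam_consistent x y z.
case: (atom_leVmeet0 (cmp (lam x y) (lam y z)) (lam_atomic x z)) => [xz_le|]; last first.
  by rewrite meetC.
by apply: leA_trans xz_le _; apply: leA_trans (leA_comp2r _ xy) (leA_comp2l _ yz).
Qed.

Hypothesis lam_onto_atoms : forall a, is_atom A a -> exists x y, lam x y = a.

Lemma network_rep_le a b : rel_eq (network_rep a) (network_rep b) -> le a b.
Proof.
move=> eq_ab; apply: leA_of_atoms => c c_atom ca.
have [x [y def_c]] := lam_onto_atoms c_atom; subst c.
have := (eq_ab (\pi_point x) (\pi_point y)).1.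
by rewrite /network_rep label_repr_pi => /(_ ca).
Qed.

Theorem network_feeble_rep : feeble_rep A network_rep.
Proof.
split.
  by move=> a b eq_ab; apply: leA_anti; apply: network_rep_le => // u v; symmetry.
split.
  by move=> u v; split=> // uv; apply: (lam_atomic (repr u) (repr v)).1; apply: leA_bot.
split; first by move=> u v; split=> // _; apply: leA_top.
split; first exact: network_rep_ident.
split; first by move=> a b u v; apply: atom_le_join.
split; first by move=> a u v; apply: atom_le_compl.
split; first by move=> a u v; rewrite /network_rep label_conv leA_conv2.
by move=> a b u v [w [uw wv]]; apply: network_rep_comp wv.
Qed.

End NetworkRepresentation.

Section RepresentationNetwork.
Context {T : finType} {A : naa T} {D : Type} (phi : T -> D -> D -> Prop).
Hypothesis phi_rep : feeble_rep A phi.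
Local Notation meet := (Defs.meet A).
Local Notation le := (leA A).
Local Notation bot := (Defs.zero A).

Lemma rep_meet a b u v : phi (meet a b) u v <-> phi a u v /\ phi b u v.
Proof.
have [_ [_ [_ [_ [rep_join [rep_compl _]]]]]] := phi_rep.
rewrite /meet rep_compl rep_join !rep_compl.
by have := classic (phi a u v); have := classic (phi b u v); tauto.
Qed.

Lemma rep_neq0 a u v : phi a u v -> a <> bot.
Proof.
have [_ [rep_bot _]] := phi_rep.
by move=> uv a0; rewrite a0 in uv; apply/(rep_bot u v).
Qed.

Lemma rep_atom_le c b u v : is_atom A c -> phi c u v -> phi b u v -> le c b.
Proof.
move=> c_atom cuv buv; case: (atom_leVmeet0 b c_atom) => // cb0.
have cbuv : phi (meet c b) u v by apply/rep_meet.
by case: (rep_neq0 cbuv cb0).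
Qed.

Lemma rep_nonempty a : a <> bot -> exists u v, phi a u v.
Proof.
have [rep_inj [rep_bot _]] := phi_rep.
move=> a_neq0; apply: NNPP => empty_a; apply: a_neq0; apply: rep_inj => u v.
by split=> [uv | /(rep_bot u v)] //; case: empty_a; exists u, v.
Qed.

(* The elements holding at a pair form an ultrafilter; in a finite algebra its
   least element is an atom. *)
Lemma rep_atom_at u v : exists2 c, is_atom A c & phi c u v.
Proof.
have [_ [_ [rep_top [_ [_ [rep_compl _]]]]]] := phi_rep.
have [m [muv m_least]] : exists m, phi m u v /\ forall b, phi b u v -> le m b.
  suff [m [muv m_least]] :
      exists m, phi m u v /\ {in enum T, forall b, phi b u v -> le m b}.
    by exists m; split=> // b; apply: m_least; rewrite mem_enum.
  elim: (enum T) => [|a s [m [muv m_least]]].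
    by exists (Defs.one A); split=> //; apply/(rep_top u v).
  case: (classic (phi a u v)) => auv.
    exists (meet m a); split; first exact/rep_meet.
    move=> b; rewrite in_cons => /predU1P [-> _|bs buv]; first exact: leA_meetr.
    exact: leA_trans (leA_meetl _ _) (m_least _ bs buv).
  exists m; split=> // b; rewrite in_cons => /predU1P [-> //|]; exact: m_least.
exists m => //; split=> [|b bm b_neq0]; first exact: rep_neq0 muv.
case: (classic (phi b u v)) => [buv | nbuv]; first exact: leA_anti bm (m_least _ buv).
have /m_least mb' : phi (Defs.neg A b) u v by apply/(rep_compl b u v).
case: b_neq0; apply: leA_bot; rewrite -(meetxC b).
exact: leA_meet (leA_refl _) (leA_trans bm mb').
Qed.

Definition atom_at (u v : D) : T :=
  epsilon (inhabits bot) (fun c => is_atom A c /\ phi c u v).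

Lemma atom_atP u v : is_atom A (atom_at u v) /\ phi (atom_at u v) u v.
Proof.
have [c c_atom cuv] := rep_atom_at u v.
by apply: (@epsilon_spec _ _ (fun c => is_atom A c /\ phi c u v)); exists c.
Qed.

Lemma atom_at_eq c u v : is_atom A c -> phi c u v -> atom_at u v = c.
Proof.
have [at_atom at_uv] := atom_atP u v.
move=> c_atom cuv; apply: leA_anti.
  exact: rep_atom_le at_atom at_uv cuv.
exact: rep_atom_le c_atom cuv at_uv.
Qed.

Section InducedNetwork.
Context {N : finType} (pt : N -> D).
Let lam i j := atom_at (pt i) (pt j).

Lemma induced_network_atomic : atomic_network A lam.
Proof. by move=> i j; case: (atom_atP (pt i) (pt j)). Qed.

Lemma induced_network_consistent : consistent_network A lam.
Proof.
have [_ [_ [_ [rep_id [_ [_ [rep_conv rep_comp]]]]]]] := phi_rep.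
have lamP i j : phi (lam i j) (pt i) (pt j) by case: (atom_atP (pt i) (pt j)).
move=> i j k; split.
  by apply: rep_atom_le (induced_network_atomic i i) (lamP i i) _; apply/rep_id.
split.
  apply: (rep_neq0 (u := pt i) (v := pt k)); apply/rep_meet; split; last exact: lamP.
  by apply: rep_comp; exists (pt j); split; apply: lamP.
split; last exact: (induced_network_atomic i j).1.
apply: (rep_neq0 (u := pt i) (v := pt j)); apply/rep_meet.
by split; [|apply/rep_conv]; apply: lamP.
Qed.

End InducedNetwork.

Theorem feeble_rep_network : inhabited D ->
  exists (N : finType) (lam : N -> N -> T),
    consistent_network A lam /\ atomic_network A lam /\
    (forall a, is_atom A a -> exists x y : N, lam x y = a).
Proof.
move=> [d0].
pose witness a := epsilon (inhabits (d0, d0)) (fun p : D * D => phi a p.1 p.2).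
have witnessP a : is_atom A a -> phi a (witness a).1 (witness a).2.
  move=> [a_neq0 _]; have [u [v auv]] := rep_nonempty a_neq0.
  by apply: (@epsilon_spec _ _ (fun p : D * D => phi a p.1 p.2)); exists (u, v).
pose pt (i : T * bool) := if i.2 then (witness i.1).2 else (witness i.1).1.
exists (T * bool)%type, (fun i j => atom_at (pt i) (pt j)).
split; first exact: induced_network_consistent.
split; first exact: induced_network_atomic.
by move=> a a_atom; exists (a, false), (a, true); apply: atom_at_eq (witnessP a a_atom).
Qed.

End RepresentationNetwork.

Theorem mainTheorem10 (T : finType) (A : naa T) :
  has_feeble_rep A <->
  exists (N : finType) (lam : N -> N -> T),
    consistent_network A lam /\ atomic_network A lam /\
    (forall a : T, is_atom A a -> exists x y : N, lam x y = a).
Proof.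
split=> [[D [phi phi_rep]] | [N [lam [lam_consistent [lam_atomic lam_onto]]]]].
  case: (classic (inhabited D)) => [D_inhabited | D_empty].
    exact: feeble_rep_network phi_rep D_inhabited.
  exists 'I_0, (fun _ _ => Defs.zero A); split; [by case | split; first by case].
  by move=> a [a_neq0 _]; have [u _] := rep_nonempty phi_rep a_neq0; case: D_empty.
by do 2!eexists; exact: network_feeble_rep lam_onto.
Qed.
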